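(* Let $n_1>n_2\geq 2$ be integers. Let $X$ consist of the vectors $(j,j,0),(j,j,1)$ for $j\in\{1,\ldots,n_2\}$, the vectors $(n_2+k,1,0),(n_2+k,n_2,1)$ for $k\in\{0,1,\ldots,n_1-n_2-1\}$, and the vector $(n_1,n_2,1)$. Let $\mathcal B$ consist of all $3$-element subsets $\{\alpha_1,\alpha_2,\alpha_3\}\subseteq X$ such that for each coordinate $j\in\{1,2,3\}$ the set $\{\alpha_{1(j)},\alpha_{2(j)},\alpha_{3(j)}\}$ of $j$-th entries has exactly $2$ elements, together with the additional triple $\{(1,1,0),(n_2,1,0),(n_2,n_2,0)\}$. Then the $3$-uniform bi-hypergraph $\mathcal H_{n_1,n_2}=(X,\mathcal B)$ is a one-realization of $\{n_1,n_2\}$.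
   Context: A bi-hypergraph $(X,\mathcal B)$ is a mixed hypergraph whose $\mathcal C$-edges and $\mathcal D$-edges both equal $\mathcal B$. A strict $k$-coloring is a partition of $X$ into exactly $k$ nonempty classes such that every edge of $\mathcal B$ contains two vertices of a common class and two vertices of distinct classes. The feasible set is the set of $k$ admitting a strict $k$-coloring; the chromatic spectrum lists, for $k=1,\ldots,\max$ of the feasible set, the number of strict $k$-colorings (as partitions). A one-realization of a set $S$ is a mixed hypergraph whose feasible set is $S$ and whose chromatic spectrum has all entries in $\{0,1\}$. $\alpha_{l(j)}$ denotes the $j$-th entry of the vector $\alpha_l$. *)

From mathcomp Require Import all_boot.
Set Implicit Arguments. Unset Strict Implicit. Unset Printing Implicit Defensive.

Section BiHypergraph.
Variable T : finType.

(* P is a strict coloring of the bi-hypergraph (X,B): P is a partition of X into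
   nonempty classes (finset's [partition P X] includes set0 \notin P), and every
   edge contains two (distinct) vertices of a common class and two vertices of
   distinct classes. *)
Definition strict_coloring (X : {set T}) (B : {set {set T}}) (P : {set {set T}}) : bool :=
  partition P X &&
  [forall E in B,
     [exists x in E, exists y in E, (x != y) && (pblock P x == pblock P y)] &&
     [exists x in E, exists y in E, pblock P x != pblock P y]].

(* number of strict k-colorings, counted as partitions (the k-th spectrum entry) *)
Definition nb_strict_colorings (X : {set T}) (B : {set {set T}}) (k : nat) : nat :=
  #|[set P : {set {set T}} | strict_coloring X B P && (#|P| == k)]|.

Definition feasible (X : {set T}) (B : {set {set T}}) (k : nat) : Prop :=
  exists P : {set {set T}}, strict_coloring X B P /\ #|P| = k.

Definition one_realization (X : {set T}) (B : {set {set T}}) (S : pred nat) : Prop :=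
  (forall k, feasible X B k <-> S k) /\
  (forall k, nb_strict_colorings X B k \in [:: 0; 1]).
End BiHypergraph.

(* Ambient finite type of triples (a,b,c) with a,b <= n1 and c <= 1;
   all vertices of H_{n1,n2} live there since n2 < n1. *)
Definition vtx (n1 : nat) : finType := ('I_n1.+1 * 'I_n1.+1 * 'I_2)%type.

Definition trip (n1 : nat) (v : vtx n1) : nat * nat * nat :=
  (nat_of_ord v.1.1, nat_of_ord v.1.2, nat_of_ord v.2).

Definition mkv (n1 a b c : nat) : vtx n1 := (inord a, inord b, inord c).

Definition inX (n1 n2 : nat) (t : nat * nat * nat) : bool :=
  [|| [exists j : 'I_n2.+1, (0 < j) && ((t == (nat_of_ord j, nat_of_ord j, 0))
                                        || (t == (nat_of_ord j, nat_of_ord j, 1)))],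
      [exists k : 'I_(n1 - n2), (t == (n2 + k, 1, 0)) || (t == (n2 + k, n2, 1))]
    | t == (n1, n2, 1)].

Definition HX (n1 n2 : nat) : {set vtx n1} := [set v | inX n1 n2 (trip v)].

Definition HB (n1 n2 : nat) : {set {set vtx n1}} :=
  [set E : {set vtx n1} | [&& E \subset HX n1 n2, #|E| == 3,
                             #|[set x.1.1 | x in E]| == 2,
                             #|[set x.1.2 | x in E]| == 2 &
                             #|[set x.2 | x in E]| == 2]]
  :|: [set [set mkv n1 1 1 0; mkv n1 n2 1 0; mkv n1 n2 n2 0]].

From mathcomp Require Import all_boot zify.
Set Implicit Arguments. Unset Strict Implicit. Unset Printing Implicit Defensive.

(* A strict coloring gives every edge exactly two colors.  Testing this on the
   edges among (1,1,0), (1,1,1), (n2,1,0), (n2,n2,0), (n2,n2,1) and on the extra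
   edge shows that (j,j,0) and (j,j,1) always share a color, that the (j,j,0)
   have pairwise distinct colors, and that (n2,1,0) has the color of (1,1,0) or
   of (n2,n2,0).  In the first case the coloring is the partition by the second
   coordinate, in the second case the partition by the first one.  Conversely,
   every edge takes exactly two values in each of its first two coordinates, so
   both partitions are strict colorings, with n2 and n1 classes. *)

Definition two_valued (U : eqType) (u v w : U) : bool :=
  ((u == v) || (v == w) || (u == w)) && ~~ ((u == v) && (v == w)).

Ltac decide_eqs_rec :=
  match goal with
  | H : is_true (?a != ?a) |- _ => by rewrite eqxx in H
  | |- is_true false -> _ => by []
  | |- is_true true -> _ => move=> _; decide_eqs_rec
  | |- context [?x == ?y] =>
     case: (eqVneq x y) => [?|?]; [subst x|]; rewrite ?eqxx /=; decide_eqs_rec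
  | _ => try done
  end.

(* Decides a boolean statement about finitely many values by case analysis on
   all their equalities; blocks [pblock P v] are first generalized to variables. *)
Ltac decide_eqs :=
  rewrite /two_valued;
  repeat match goal with |- context [pblock ?P ?v] => move: (pblock P v) => ? end;
  decide_eqs_rec.

Lemma card_set3_eq2 (T : finType) (a b c : T) : (#|[set a; b; c]| == 2) = two_valued a b c.
Proof. by rewrite -setUA !cardsU1 cards1 !inE; decide_eqs. Qed.

Lemma card_set3 (T : finType) (a b c : T) : a != b -> b != c -> a != c -> #|[set a; b; c]| = 3.
Proof. by rewrite -setUA !cardsU1 cards1 !inE; decide_eqs. Qed.

Section Partitions.
Variable T : finType.
Implicit Types (D E : {set T}) (P : {set {set T}}).

Lemma exists_collisionE (U : finType) (f : T -> U) E :
  [exists x in E, exists y in E, (x != y) && (f x == f y)] = (#|f @: E| < #|E|).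
Proof.
rewrite ltn_neqAle leq_imset_card andbT; case: imset_injP => [inj_f | not_inj] /=.
  apply/negbTE/exists_inP=> -[x Ex /exists_inP[y Ey /andP[/negP nxy fxy]]].
  by apply/nxy/eqP/inj_f/eqP.
apply: contraT => /exists_inP no_collision; case: not_inj => x y Ex Ey fxy.
apply: contraTeq isT => nxy; case: no_collision.
by exists x => //; apply/exists_inP; exists y => //; rewrite nxy fxy eqxx.
Qed.

Lemma exists_separationE (U : finType) (f : T -> U) E :
  [exists x in E, exists y in E, f x != f y] = (1 < #|f @: E|).
Proof.
rewrite ltnNge; case: card_le1_eqP => [f_const | f_nonconst] /=.
  apply/negbTE/exists_inP=> -[x Ex /exists_inP[y Ey /eqP[]]].
  by apply: f_const; apply: imset_f.
apply: contraT => /exists_inP no_separation; case: f_nonconst.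
move=> _ _ /imsetP[x Ex ->] /imsetP[y Ey ->] /=.
apply: contraTeq isT => fxy; case: no_separation.
by exists y => //; apply/exists_inP; exists x.
Qed.

Lemma card_preim_partition (U : finType) (f : T -> U) D :
  #|preim_partition f D| = #|f @: D|.
Proof.
rewrite /preim_partition /equivalence_partition.
have -> : [set [set y in D | f x == f y] | x in D] =
          [set [set y in D | u == f y] | u in f @: D] by rewrite -imset_comp.
apply: card_in_imset => _ _ /imsetP[x Dx ->] /imsetP[y Dy ->] /setP/(_ y).
by rewrite !inE Dy eqxx andbT => /eqP.
Qed.

Lemma preim_partition_eq_in (U V : finType) (f : T -> U) (g : T -> V) D :
  {in D &, forall x y, (f x == f y) = (g x == g y)} ->
  preim_partition f D = preim_partition g D.
Proof.
move=> fg; apply: eq_in_imset => x Dx; apply/setP => y; rewrite !inE.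
by apply: andb_id2l => Dy; apply: fg.
Qed.

Lemma card_imset_eq_in (U V : finType) (f : T -> U) (g : T -> V) D :
  {in D &, forall x y, (f x == f y) = (g x == g y)} -> #|f @: D| = #|g @: D|.
Proof.
by move=> fg; rewrite -(card_preim_partition f) -(card_preim_partition g) (preim_partition_eq_in fg).
Qed.

Lemma eq_pblock_preim_partition (U : finType) (f : T -> U) D :
  {in D &, forall x y,
    (pblock (preim_partition f D) x == pblock (preim_partition f D) y) = (f x == f y)}.
Proof.
have /and3P[/eqP coverP trivP _] := preim_partitionP f D.
move=> x y Dx Dy; rewrite eq_pblock //; last by rewrite coverP.
by apply: pblock_equivalence_partition => // ? ? ? _ _ _; split=> // /eqP->.
Qed.

Lemma partition_eq_preim (U : finType) (f : T -> U) P D :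
  partition P D -> {in D &, forall x y, (pblock P x == pblock P y) = (f x == f y)} ->
  P = preim_partition f D.
Proof. by move=> partP Pf; rewrite -{1}(preim_partition_pblock partP); apply: preim_partition_eq_in. Qed.

Lemma strict_coloringE D (B : {set {set T}}) P :
  strict_coloring D B P = partition P D && [forall E in B, 1 < #|pblock P @: E| < #|E|].
Proof.
congr (_ && _); apply: eq_forallb_in => E _.
by rewrite exists_collisionE exists_separationE andbC.
Qed.

Lemma strict_preim_partition (U : finType) (f : T -> U) D (B : {set {set T}}) :
  {in B, forall E, E \subset D /\ 1 < #|f @: E| < #|E|} ->
  strict_coloring D B (preim_partition f D).
Proof.
move=> Bf; rewrite strict_coloringE preim_partitionP; apply/forall_inP => E /Bf[ED].
rewrite (@card_imset_eq_in _ _ _ f) // => x y Ex Ey.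
by apply: eq_pblock_preim_partition; apply: (subsetP ED).
Qed.

Lemma strict_coloring_triple D (B : {set {set T}}) P (x y z : T) :
  strict_coloring D B P -> [set x; y; z] \in B ->
  two_valued (pblock P x) (pblock P y) (pblock P z).
Proof.
rewrite strict_coloringE => /andP[_ /forall_inP PB] /PB.
have : #|[set x; y; z]| <= 3.
  by rewrite -setUA !cardsU1 cards1; do 2!case: (_ \notin _).
by rewrite !imsetU !imset_set1 -card_set3_eq2; lia.
Qed.

Lemma one_realization_pair D (B : {set {set T}}) (P1 P2 : {set {set T}}) :
  (forall P, strict_coloring D B P <-> P = P1 \/ P = P2) -> #|P1| != #|P2| ->
  one_realization D B (fun k => (k == #|P1|) || (k == #|P2|)).
Proof.
move=> strictP P12; split=> k.
  split=> [[P [/strictP[]-> <-]]|/orP[]/eqP->]; rewrite ?eqxx ?orbT //.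
    by exists P1; split=> //; apply/strictP; left.
  by exists P2; split=> //; apply/strictP; right.
have : [set P | strict_coloring D B P & #|P| == k] \subset [set if k == #|P1| then P1 else P2].
  apply/subsetP => P; rewrite !inE => /andP[/strictP[]-> /eqP <-]; first by rewrite eqxx.
  by rewrite [#|P2| == _]eq_sym (negbTE P12).
by move/subset_leq_card; rewrite cards1 /nb_strict_colorings; case: #|_| => [|[]].
Qed.

End Partitions.

Lemma card_ord_interval n m : m <= n -> #|[set i : 'I_n.+1 | 0 < i <= m]| = m.
Proof.
move=> m_le; have -> : [set i : 'I_n.+1 | 0 < i <= m] = [set inord k.+1 | k : 'I_m].
  apply/setP => i; rewrite inE; apply/idP/imsetP => [i_range|[k _ ->]].
    have k_lt : i.-1 < m by lia.
    by exists (Ordinal k_lt); rewrite //= prednK ?inord_val //; lia.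
  by rewrite inordK; have := ltn_ord k; lia.
rewrite card_imset ?card_ord // => k l /(congr1 val).
by rewrite /= !inordK; [move=> [] /val_inj | have := ltn_ord l; lia | have := ltn_ord k; lia].
Qed.

Section Hypergraph.
Variables n1 n2 : nat.
Hypothesis n2_ge2 : 2 <= n2.
Hypothesis n2_lt_n1 : n2 < n1.

Local Notation X := (HX n1 n2).
Local Notation B := (HB n1 n2).
Local Notation p1 v := (nat_of_ord (v : vtx n1).1.1).
Local Notation p2 v := (nat_of_ord (v : vtx n1).1.2).
Local Notation p3 v := (nat_of_ord (v : vtx n1).2).

Definition is_vertex (a b c : nat) : Prop :=
  (1 <= a <= n2 /\ b = a) \/ (n2 <= a < n1 /\ b = 1 /\ c = 0) \/
  (n2 < a <= n1 /\ b = n2 /\ c = 1).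

Lemma p1_mkv a b c : a <= n1 -> p1 (mkv n1 a b c) = a.
Proof. by move=> a_le; rewrite /= inordK. Qed.

Lemma p2_mkv a b c : b <= n1 -> p2 (mkv n1 a b c) = b.
Proof. by move=> b_le; rewrite /= inordK. Qed.

Lemma p3_mkv a b c : c <= 1 -> p3 (mkv n1 a b c) = c.
Proof. by move=> c_le; rewrite /= inordK. Qed.

Lemma mkv_coords (v : vtx n1) : mkv n1 (p1 v) (p2 v) (p3 v) = v.
Proof. by case: v => [[a b] c]; rewrite /mkv !inord_val. Qed.

Lemma in_HX v : v \in X <-> is_vertex (p1 v) (p2 v) (p3 v).
Proof.
case: v => [[x1 x2] x3]; rewrite inE /inX /trip /is_vertex /=.
have := ltn_ord x1; have := ltn_ord x3.
move: (nat_of_ord x1) (nat_of_ord x2) (nat_of_ord x3) => a b c a_lt c_lt.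
split.
- case/or3P.
  + by case/existsP=> j /andP[j_gt0 /orP[]/eqP[-> -> ->]]; have := ltn_ord j; lia.
  + by case/existsP=> k /orP[]/eqP[-> -> ->]; have := ltn_ord k; lia.
  + by case/eqP=> -> -> ->; lia.
- case=> [[a_range b_eq]|[[a_range [b_eq c_eq]]|[a_range [b_eq c_eq]]]].
  + apply/or3P/Or31/existsP; have j_lt : a < n2.+1 by lia.
    by exists (Ordinal j_lt); rewrite /= !xpair_eqE; lia.
  + apply/or3P/Or32/existsP; have k_lt : a - n2 < n1 - n2 by lia.
    by exists (Ordinal k_lt); rewrite /= !xpair_eqE; lia.
  + have [->|a_neq] := eqVneq a n1; first by apply/or3P/Or33; rewrite !xpair_eqE; lia.
    apply/or3P/Or32/existsP; have k_lt : a - n2 < n1 - n2 by lia.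
    by exists (Ordinal k_lt); rewrite /= !xpair_eqE; lia.
Qed.

Lemma is_vertex_bounds a b c : is_vertex a b c -> a <= n1 /\ b <= n1.
Proof. by rewrite /is_vertex; lia. Qed.

Lemma mkv_in_HX a b c : c <= 1 -> is_vertex a b c -> mkv n1 a b c \in X.
Proof.
move=> c_le vabc; have [a_le b_le] := is_vertex_bounds vabc.
by apply/in_HX; rewrite p1_mkv ?p2_mkv ?p3_mkv.
Qed.

Lemma HB_triple (x y z : vtx n1) : x \in X -> y \in X -> z \in X ->
  x != y -> y != z -> x != z -> two_valued (p1 x) (p1 y) (p1 z) ->
  two_valued (p2 x) (p2 y) (p2 z) -> two_valued (p3 x) (p3 y) (p3 z) -> [set x; y; z] \in B.
Proof.
move=> Xx Xy Xz xy yz xz t1 t2 t3; rewrite !inE; apply/orP; left; apply/and5P; split.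
- by apply/subsetP => u /setUP[/setUP[]|] /set1P->.
- by rewrite card_set3.
- by rewrite !imsetU !imset_set1 card_set3_eq2.
- by rewrite !imsetU !imset_set1 card_set3_eq2.
- by rewrite !imsetU !imset_set1 card_set3_eq2.
Qed.

Lemma trip_mkv a b c : a <= n1 -> b <= n1 -> c <= 1 -> trip (mkv n1 a b c) = (a, b, c).
Proof. by move=> a_le b_le c_le; rewrite /trip p1_mkv ?p2_mkv ?p3_mkv. Qed.

Lemma mkv_neq a b c a' b' c' :
  a <= n1 -> b <= n1 -> c <= 1 -> a' <= n1 -> b' <= n1 -> c' <= 1 ->
  (a, b, c) != (a', b', c') -> mkv n1 a b c != mkv n1 a' b' c'.
Proof.
move=> *; apply/eqP => /(congr1 (@trip n1)).
by rewrite !trip_mkv // => /eqP; apply/negP.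
Qed.

Lemma HB_mkv_triple a b c a' b' c' a'' b'' c'' :
  c <= 1 -> c' <= 1 -> c'' <= 1 ->
  is_vertex a b c -> is_vertex a' b' c' -> is_vertex a'' b'' c'' ->
  (a, b, c) != (a', b', c') -> (a', b', c') != (a'', b'', c'') -> (a, b, c) != (a'', b'', c'') ->
  two_valued a a' a'' -> two_valued b b' b'' -> two_valued c c' c'' ->
  [set mkv n1 a b c; mkv n1 a' b' c'; mkv n1 a'' b'' c''] \in B.
Proof.
move=> c_le c_le' c_le'' v v' v'' d d' d'' t1 t2 t3.
have [a_le b_le] := is_vertex_bounds v.
have [a_le' b_le'] := is_vertex_bounds v'.
have [a_le'' b_le''] := is_vertex_bounds v''.
by apply: HB_triple; rewrite ?mkv_in_HX ?p1_mkv ?p2_mkv ?p3_mkv //; apply: mkv_neq.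
Qed.

Local Notation va j := (mkv n1 j j 0).
Local Notation vb j := (mkv n1 j j 1).
Local Notation vc m := (mkv n1 m 1 0).
Local Notation vd m := (mkv n1 m n2 1).

Lemma extra_edge_in_HB : [set va 1; vc n2; va n2] \in B.
Proof. by rewrite !inE eqxx orbT. Qed.

Definition coord1 (v : vtx n1) : 'I_n1.+1 := v.1.1.
Definition coord2 (v : vtx n1) : 'I_n1.+1 := v.1.2.

Definition first_rep i := if i <= n2 then va i else vd i.

Lemma p1_range v : v \in X -> 1 <= p1 v <= n1.
Proof. by move/in_HX; rewrite /is_vertex; lia. Qed.

Lemma p2_range v : v \in X -> 1 <= p2 v <= n2.
Proof. by move/in_HX; rewrite /is_vertex; lia. Qed.

Section StrictColoring.
Variable P : {set {set vtx n1}}.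
Hypothesis P_strict : strict_coloring X B P.
Local Notation col := (pblock P).

Local Ltac edge :=
  apply: (strict_coloring_triple P_strict); apply: HB_mkv_triple;
  rewrite /is_vertex /two_valued ?xpair_eqE;
  repeat match goal with H : context [pblock _ _] |- _ => clear H end; lia.

Lemma col_base :
  [&& col (va 1) == col (vb 1), col (va n2) == col (vb n2), col (va 1) != col (va n2) &
      (col (vc n2) == col (va 1)) || (col (vc n2) == col (va n2))].
Proof.
have e1 : two_valued (col (va 1)) (col (vb 1)) (col (va n2)) by edge.
have e2 : two_valued (col (va 1)) (col (vb 1)) (col (vb n2)) by edge.
have e3 : two_valued (col (va 1)) (col (vc n2)) (col (vb n2)) by edge.
have e4 : two_valued (col (va 1)) (col (va n2)) (col (vb n2)) by edge.
have e5 : two_valued (col (vb 1)) (col (vc n2)) (col (va n2)) by edge.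
have e6 : two_valued (col (vb 1)) (col (vc n2)) (col (vb n2)) by edge.
have e7 : two_valued (col (vb 1)) (col (va n2)) (col (vb n2)) by edge.
have e8 := strict_coloring_triple P_strict extra_edge_in_HB.
by move: e1 e2 e3 e4 e5 e6 e7 e8; decide_eqs.
Qed.

Lemma col_va_vb j : 1 <= j <= n2 -> col (va j) = col (vb j).
Proof.
move=> j_range; have /and4P[ab1 abN a1N _] := col_base.
have [->|j_neq1] := eqVneq j 1; first exact/eqP.
have [->|j_neqN] := eqVneq j n2; first exact/eqP.
have e1 : two_valued (col (va j)) (col (va 1)) (col (vb 1)) by edge.
have e2 : two_valued (col (va j)) (col (va n2)) (col (vb n2)) by edge.
have e3 : two_valued (col (vb j)) (col (va 1)) (col (vb 1)) by edge.
have e4 : two_valued (col (vb j)) (col (va n2)) (col (vb n2)) by edge.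
have e5 : two_valued (col (va j)) (col (vb j)) (col (va 1)) by edge.
by apply/eqP; move: ab1 abN a1N e1 e2 e3 e4 e5; decide_eqs.
Qed.

Lemma col_va_neq i j : 1 <= i <= n2 -> 1 <= j <= n2 -> i != j -> col (va i) != col (va j).
Proof.
move=> i_range j_range ij.
have e : two_valued (col (va i)) (col (va j)) (col (vb j)) by edge.
by move: e; rewrite -col_va_vb //; decide_eqs.
Qed.

Lemma col_by_second : col (vc n2) == col (va 1) -> {in X, forall v, col v = col (va (p2 v))}.
Proof.
move=> cN_a1 v Xv; have /and4P[ab1 abN a1N _] := col_base.
rewrite -[in col v](mkv_coords v); move/in_HX: Xv (ltn_ord v.2).
move: (p1 v) (p2 v) (p3 v) => a b c.
case=> [[a_range ->]|[[a_range [-> ->]]|[a_range [-> ->]]]] c_lt //.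
- by case: c c_lt => [|[|//]] _; rewrite // col_va_vb.
- have [->|a_neqN] := eqVneq a n2; first exact/eqP.
  have e1 : two_valued (col (vc a)) (col (vc n2)) (col (vb n2)) by edge.
  have e2 : two_valued (col (vc a)) (col (va n2)) (col (vb n2)) by edge.
  by apply/eqP; move: cN_a1 abN a1N e1 e2; decide_eqs.
- have e1 : two_valued (col (vd a)) (col (va 1)) (col (vb 1)) by edge.
  have e2 : two_valued (col (vd a)) (col (vc n2)) (col (va n2)) by edge.
  by apply/eqP; move: ab1 cN_a1 a1N e1 e2; decide_eqs.
Qed.

Lemma col_kernel_second : col (vc n2) == col (va 1) ->
  {in X &, forall x y, (col x == col y) = (p2 x == p2 y)}.
Proof.
move=> cN_a1 x y Xx Xy; rewrite (col_by_second cN_a1 Xx) (col_by_second cN_a1 Xy).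
have [->|neq] := eqVneq (p2 x) (p2 y); first by rewrite !eqxx.
by apply/negbTE/col_va_neq; rewrite ?p2_range.
Qed.

Lemma col_vc_vd m : col (vc n2) == col (va n2) -> n2 < m < n1 -> col (vc m) = col (vd m).
Proof.
move=> cN_aN m_range; have /and4P[ab1 abN a1N _] := col_base.
have e1 : two_valued (col (vc m)) (col (vd m)) (col (va 1)) by edge.
have e2 : two_valued (col (vc m)) (col (vd m)) (col (va n2)) by edge.
have e3 : two_valued (col (vd m)) (col (vc n2)) (col (va n2)) by edge.
have e4 : two_valued (col (vd m)) (col (va 1)) (col (vb 1)) by edge.
by apply/eqP; move: ab1 cN_aN a1N e1 e2 e3 e4; decide_eqs.
Qed.

Lemma col_by_first : col (vc n2) == col (va n2) ->
  {in X, forall v, col v = col (first_rep (p1 v))}.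
Proof.
move=> cN_aN v Xv; rewrite -[in col v](mkv_coords v) /first_rep.
move/in_HX: Xv (ltn_ord v.2); move: (p1 v) (p2 v) (p3 v) => a b c.
case=> [[a_range ->]|[[a_range [-> ->]]|[a_range [-> ->]]]] c_lt.
- rewrite ifT; last lia.
  by case: c c_lt => [|[|//]] _ //; rewrite col_va_vb.
- have [->|a_neqN] := eqVneq a n2; first by rewrite leqnn; apply/eqP.
  by rewrite ifF; [apply: col_vc_vd => //; lia | lia].
- by rewrite ifF; [|lia].
Qed.

Lemma col_first_rep_neq i j : col (vc n2) == col (va n2) ->
  1 <= i -> i < j -> j <= n1 -> col (first_rep i) != col (first_rep j).
Proof.
move=> cN_aN i_gt0 ij j_le; rewrite /first_rep eq_sym.
have [j_le2|j_gt2] := leqP j n2; first by rewrite ifT ?col_va_neq //; lia.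
have [i_le2|i_gt2] := leqP i n2.
  have [->|i_neqN] := eqVneq i n2.
    have e : two_valued (col (vd j)) (col (vc n2)) (col (va n2)) by edge.
    by move: cN_aN e; decide_eqs.
  have e : two_valued (col (va i)) (col (vb i)) (col (vd j)) by edge.
  by move: e; rewrite -col_va_vb; [decide_eqs|lia].
have e : two_valued (col (vc i)) (col (vd i)) (col (vd j)) by edge.
by move: e; rewrite col_vc_vd; [decide_eqs|done|lia].
Qed.

Lemma col_kernel_first : col (vc n2) == col (va n2) ->
  {in X &, forall x y, (col x == col y) = (p1 x == p1 y)}.
Proof.
move=> cN_aN x y Xx Xy; rewrite (col_by_first cN_aN Xx) (col_by_first cN_aN Xy).
have := p1_range Xx; have := p1_range Xy.
case: (ltngtP (p1 x) (p1 y)) => [lt|lt|->] y_range x_range.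
- by apply/negbTE/col_first_rep_neq => //; lia.
- by rewrite eq_sym; apply/negbTE/col_first_rep_neq => //; lia.
- by rewrite !eqxx.
Qed.

Lemma strict_coloring_preim_coord : P = preim_partition coord1 X \/ P = preim_partition coord2 X.
Proof.
have partP : partition P X by case/andP: P_strict.
have /and4P[_ _ _ /orP[cN_a1|cN_aN]] := col_base; [right|left].
- by apply: partition_eq_preim partP _ => x y Xx Xy; rewrite col_kernel_second.
- by apply: partition_eq_preim partP _ => x y Xx Xy; rewrite col_kernel_first.
Qed.

End StrictColoring.

Lemma HB_coords E : E \in B ->
  [/\ E \subset X, #|E| = 3, #|coord1 @: E| = 2 & #|coord2 @: E| = 2].
Proof.
rewrite !inE => /orP[/and5P[EX /eqP E3 /eqP E1 /eqP E2 _] // | /eqP->].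
split.
- apply/subsetP => v /setUP[/setUP[]|] /set1P->;
    by apply: mkv_in_HX; rewrite /is_vertex; lia.
- by apply: card_set3; apply: mkv_neq; rewrite ?xpair_eqE; lia.
- apply/eqP; rewrite !imsetU !imset_set1 card_set3_eq2 /coord1 /two_valued.
  by rewrite -!val_eqE /= !inordK; lia.
- apply/eqP; rewrite !imsetU !imset_set1 card_set3_eq2 /coord2 /two_valued.
  by rewrite -!val_eqE /= !inordK; lia.
Qed.

Lemma strict_preim_coord1 : strict_coloring X B (preim_partition coord1 X).
Proof. by apply: strict_preim_partition => E /HB_coords[EX -> -> _]. Qed.

Lemma strict_preim_coord2 : strict_coloring X B (preim_partition coord2 X).
Proof. by apply: strict_preim_partition => E /HB_coords[EX -> _ ->]. Qed.

Lemma strict_coloringP P :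
  strict_coloring X B P <-> P = preim_partition coord1 X \/ P = preim_partition coord2 X.
Proof.
split=> [/strict_coloring_preim_coord // | [] ->].
  exact: strict_preim_coord1.
exact: strict_preim_coord2.
Qed.

Lemma card_preim_coord1 : #|preim_partition coord1 X| = n1.
Proof.
rewrite card_preim_partition.
suff -> : coord1 @: X = [set i : 'I_n1.+1 | 0 < i <= n1] by rewrite card_ord_interval.
apply/setP => i; rewrite inE; apply/imsetP/idP => [[v /p1_range v_range ->] //|i_range].
exists (first_rep i); last by rewrite /coord1 /first_rep; case: ifP; rewrite /= inord_val.
by rewrite /first_rep; case: ifP => i_le; apply: mkv_in_HX; rewrite /is_vertex; lia.
Qed.

Lemma card_preim_coord2 : #|preim_partition coord2 X| = n2.
Proof.
rewrite card_preim_partition.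
suff -> : coord2 @: X = [set i : 'I_n1.+1 | 0 < i <= n2] by rewrite card_ord_interval // ltnW.
apply/setP => i; rewrite inE; apply/imsetP/idP => [[v /p2_range v_range ->] //|i_range].
by exists (va i); rewrite ?/coord2 /= ?inord_val //; apply: mkv_in_HX; rewrite /is_vertex; lia.
Qed.

End Hypergraph.

Theorem lemma2p2 (n1 n2 : nat) :
  2 <= n2 -> n2 < n1 ->
  one_realization (HX n1 n2) (HB n1 n2) (fun k => (k == n1) || (k == n2)).
Proof.
move=> n2_ge2 n2_lt_n1.
have := one_realization_pair (strict_coloringP n2_ge2 n2_lt_n1).
by rewrite card_preim_coord1 ?card_preim_coord2 //; apply; lia.
Qed.
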